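(* Let $G$ be a graph, let $\mathcal P$ be a partition of $A\subseteq V(G)$ and $\mathcal P'$ a partition of $A'\subseteq V(G)$. If $d(A,A')\ne 0$ then $$\mathcal H(\mathcal P,\mathcal P')-\mathcal H(\{A\},\{A'\})\ge \frac12\, d(A,A')\Bigg(\sum_{V\in\mathcal P,\ V'\in\mathcal P'}\frac{|V||V'|}{|A||A'|}\,\Big|\frac{d(V,V')}{d(A,A')}-1\Big|\Bigg)^2 .$$
   Context: $e(X,Y)$ is the number of ordered pairs $(u,v)\in X\times Y$ with $uv\in E(G)$ and $d(X,Y)=e(X,Y)/(|X||Y|)$. $H(x)=x\ln x$ with $H(0)=0$. For a partition $\mathcal P$ of $A\subseteq V(G)$ and a partition $\mathcal P'$ of $A'\subseteq V(G)$, $$\mathcal H(\mathcal P,\mathcal P')=\sum_{V\in\mathcal P,\,V'\in\mathcal P'}\frac{|V||V'|}{|A||A'|}H(d(V,V')).$$ *)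

From HB Require Import structures.
From mathcomp Require Import all_boot all_order all_algebra.
From mathcomp Require Import all_classical all_reals all_analysis.
Set Implicit Arguments. Unset Strict Implicit. Unset Printing Implicit Defensive.
Import Order.TTheory GRing.Theory Num.Theory.
Local Open Scope ring_scope.

(* A (finite, simple) graph on vertex type T is given by an adjacency relation
   [adj]; simplicity is imposed as hypotheses in the theorem. *)

Definition edges_between (T : finType) (adj : rel T) (X Y : {set T}) : nat :=
  #|[set p : T * T | [&& p.1 \in X, p.2 \in Y & adj p.1 p.2]]|.

(* d(X,Y) = e(X,Y) / (|X||Y|)  (equal to 0 when X or Y is empty, by the
   MathComp convention x / 0 = 0). *)
Definition density (R : realType) (T : finType) (adj : rel T) (X Y : {set T}) : R :=
  (edges_between adj X Y)%:R / (#|X|%:R * #|Y|%:R).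

Definition Hfun (R : realType) (x : R) : R := if x == 0 then 0 else x * ln x.

Definition calH (R : realType) (T : finType) (adj : rel T)
    (A A' : {set T}) (P P' : {set {set T}}) : R :=
  \sum_(V in P) \sum_(V' in P')
     ((#|V|%:R * #|V'|%:R) / (#|A|%:R * #|A'|%:R)) * Hfun (density R adj V V').

From HB Require Import structures.
From mathcomp Require Import classical_sets functions topology.
From mathcomp Require Import all_boot all_order all_algebra.
From mathcomp Require Import reals normedtype derive realfun exp.
From mathcomp Require Import ring lra.
Import Order.TTheory GRing.Theory Num.Theory numFieldNormedType.Exports.
Local Open Scope classical_set_scope.
Local Open Scope ring_scope.

(* With w(V,V') = |V||V'|/(|A||A'|) and x(V,V') = d(V,V')/d(A,A'), the weights
   w sum to 1 and, e being additive over the blocks, so does w x.  The identity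
   H(a x) = x H(a) + a H(x) turns the left-hand side into d(A,A') times the
   relative entropy sum w H(x), and the claim becomes Pinsker's inequality
   sum w H(x) >= (sum w |x - 1|)^2 / 2.  This follows by summing the pointwise
   bound x ln x - x + 1 >= 3/2 (x - 1)^2 / (x + 2) and applying AM-GM termwise,
   using sum w (x + 2) = 3. *)

Section PinskerInequality.
Variable R : realType.

Lemma derive1_sign_change_min (f : R -> R) (c x : R) : 0 < c -> 0 < x ->
  (forall y, 0 < y -> derivable f y 1) ->
  (forall y, 0 < y -> 0 <= (y - c) * (f^`())%classic y) -> f c <= f x.
Proof.
move=> c0 x0 df df_sign.
have cont a b : 0 < a -> {within `[a, b], continuous f}.
  move=> a0; apply: derivable_within_continuous => y /[!in_itv] /andP[ay _].
  exact/df/(lt_le_trans a0).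
have [cx | xc] := leP c x.
  apply: (ger0_derive1_le_cc (a:=c) (b:=x) _ _ (cont _ _ c0));
    rewrite ?in_itv /= ?lexx ?cx //.
    by move=> y /[!in_itv] /andP[cy _]; exact/df/(lt_trans c0).
  move=> y /[!in_itv] /andP[cy _]; have := df_sign y (lt_trans c0 cy).
  by rewrite pmulr_rge0 // subr_gt0.
apply: (ler0_derive1_le_cc (a:=x) (b:=c) _ _ (cont _ _ x0));
  rewrite ?in_itv /= ?lexx ?ltW //.
  by move=> y /[!in_itv] /andP[xy _]; exact/df/(lt_trans x0).
move=> y /[!in_itv] /andP[xy yc]; have := df_sign y (lt_trans x0 xy).
by rewrite nmulr_rge0 // subr_lt0.
Qed.

(* [pinsker_fn x - 5/2] is [(x ln x - x + 1 - 3/2 (x - 1)^2 / (x + 2)) / x]. *)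
Definition pinsker_fn (x : R) : R := ln x + (4 * x)^-1 + 27 / (4 * (x + 2)).

Lemma is_derive_pinsker_fn (x : R) : 0 < x ->
  is_derive x 1 pinsker_fn ((x - 1) ^+ 3 / (x ^+ 2 * (x + 2) ^+ 2)).
Proof.
move=> x0; have x2 : 0 < x + 2 by lra.
have d0 : is_derive x 1 (fun z => (4 * z)^-1) (- (4 * x) ^- 2 *: (4 * 1)).
  by apply: is_deriveV; rewrite gt_eqF // mulr_gt0.
have d2 : is_derive x 1 (fun z => (4 * (z + 2))^-1)
                      (- (4 * (x + 2)) ^- 2 *: (4 * (1 + 0))).
  by apply: is_deriveV; rewrite gt_eqF // mulr_gt0.
have -> : pinsker_fn =
    @ln R + (fun z => (4 * z)^-1) + 27 \*: (fun z => (4 * (z + 2))^-1) by [].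
have := is_deriveD (is_deriveD (is_derive1_ln x0) d0) (is_deriveZ 27 d2).
move/is_derive_eq; apply; rewrite /GRing.scale /= !addr0 !mulr1.
by field; rewrite !gt_eqF.
Qed.

Lemma pinsker_fn_ge (x : R) : 0 < x -> 5 / 2 <= pinsker_fn x.
Proof.
move=> x0; have -> : 5 / 2 = pinsker_fn 1 by rewrite /pinsker_fn ln1; field.
apply: derive1_sign_change_min => // [y y0 | y y0].
  by have [] := is_derive_pinsker_fn y y0.
rewrite derive1E (is_derive_pinsker_fn y y0).(derive_val) mulrA -exprS.
by rewrite divr_ge0 ?exprn_even_ge0 // mulr_ge0 ?exprn_even_ge0.
Qed.

Lemma Hfun_pinsker_bound (x : R) : 0 <= x ->
  3 / 2 * ((x - 1) ^+ 2 / (x + 2)) <= Hfun x - x + 1.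
Proof.
rewrite le_eqVlt => /predU1P[<- | x0].
  by rewrite /Hfun eqxx sub0r sqrrN expr1n add0r; lra.
have x2 : 0 < x + 2 by lra.
rewrite -subr_ge0 (_ : _ - _ = x * (pinsker_fn x - 5 / 2)).
  by rewrite mulr_ge0 ?subr_ge0 ?pinsker_fn_ge // ltW.
by rewrite /Hfun /pinsker_fn gt_eqF //; field; rewrite !gt_eqF.
Qed.

Lemma sqr_div_ge (a b t : R) : 0 < b -> 2 * t * a - t ^+ 2 * b <= a ^+ 2 / b.
Proof.
move=> b0; rewrite -subr_ge0 (_ : _ - _ = (a - t * b) ^+ 2 / b).
  by rewrite divr_ge0 ?sqr_ge0 ?ltW.
by field; rewrite gt_eqF.
Qed.

Lemma pinsker (I : finType) (D : pred I) (w x : I -> R) :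
  (forall i, D i -> 0 <= w i) -> (forall i, D i -> 0 <= x i) ->
  \sum_(i | D i) w i = 1 -> \sum_(i | D i) w i * x i = 1 ->
  2^-1 * (\sum_(i | D i) w i * `|x i - 1|) ^+ 2 <= \sum_(i | D i) w i * Hfun (x i).
Proof.
move=> w0 x0 sum_w sum_wx; set s := \sum_(i | D i) _ * `|_|.
have -> : \sum_(i | D i) w i * Hfun (x i) = \sum_(i | D i) w i * (Hfun (x i) - x i + 1).
  under [RHS]eq_bigr do rewrite mulrDr mulrBr mulr1.
  by rewrite big_split /= sumrB sum_wx sum_w subrK.
(* AM-GM with t = s/3; the terms sum to s^2 - s^2/6 - s^2/3 = s^2/2. *)
have termwise i : D i ->
    s * (w i * `|x i - 1|) - s ^+ 2 / 6 * (w i * x i) - s ^+ 2 / 3 * w i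
    <= w i * (Hfun (x i) - x i + 1).
  move=> iD; have x2 : 0 < x i + 2 by have := x0 i iD; lra.
  rewrite (_ : _ - _ - _ = w i * (3 / 2 *
      (2 * (s / 3) * `|x i - 1| - (s / 3) ^+ 2 * (x i + 2)))); last by field.
  rewrite ler_wpM2l ?w0 //; apply: le_trans _ (Hfun_pinsker_bound _ (x0 i iD)).
  apply: ler_wpM2l; first lra.
  by rewrite -(real_normK (num_real (x i - 1))) sqr_div_ge.
apply: le_trans (ler_sum _ termwise).
rewrite !sumrB -!mulr_sumr sum_wx sum_w -/s; lra.
Qed.

Lemma HfunM (a x : R) : 0 <= a -> 0 <= x -> Hfun (a * x) = x * Hfun a + a * Hfun x.
Proof.
rewrite !le_eqVlt => /predU1P[<- | a0] /predU1P[<- | x0];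
  rewrite /Hfun ?mul0r ?mulr0 ?eqxx ?addr0 ?add0r ?mulr0 //.
by rewrite mulf_eq0 !gt_eqF //= lnM ?posrE //; ring.
Qed.
End PinskerInequality.

Section Densities.
Context {T : finType} (adj : rel T).

Lemma edges_betweenE (X Y : {set T}) :
  edges_between adj X Y = (\sum_(u in X) \sum_(v in Y) adj u v)%N.
Proof.
rewrite /edges_between -sum1_card (eq_bigl _ _ (in_set _)).
rewrite -(pair_big_dep (mem X) (fun u v => (v \in Y) && adj u v) (fun _ _ => 1%N)).
by apply: eq_bigr => u _; rewrite big_mkcondr; apply: eq_bigr => v _; case: adj.
Qed.

Lemma edges_between_le (X Y : {set T}) : (edges_between adj X Y <= #|X| * #|Y|)%N.
Proof.
rewrite -cardsX; apply: subset_leq_card; apply/subsetP => p.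
by rewrite !inE => /and3P[-> -> _].
Qed.

Lemma edges_between_partition {A A' : {set T}} {P P' : {set {set T}}} :
  partition P A -> partition P' A' ->
  edges_between adj A A' = (\sum_(V in P) \sum_(V' in P') edges_between adj V V')%N.
Proof.
move=> /and3P[/eqP <- trivP _] /and3P[/eqP <- trivP' _].
rewrite edges_betweenE big_trivIset //; apply: eq_bigr => V _.
under eq_bigr do rewrite big_trivIset //.
by rewrite exchange_big; apply: eq_bigr => V' _; rewrite edges_betweenE.
Qed.

Variable R : realType.

Lemma density_ge0 (X Y : {set T}) : 0 <= density R adj X Y.
Proof. by rewrite divr_ge0 ?mulr_ge0. Qed.

Lemma mul_card_density (X Y : {set T}) :
  #|X|%:R * #|Y|%:R * density R adj X Y = (edges_between adj X Y)%:R.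
Proof.
have [XY0 | XY_neq0] := eqVneq (#|X|%:R * #|Y|%:R : R) 0;
  last by rewrite mulrC divfK.
rewrite XY0 mul0r; apply/esym/eqP; rewrite pnatr_eq0 -leqn0.
by rewrite (leq_trans (edges_between_le X Y)) // leqn0 -(eqr_nat R) natrM XY0.
Qed.
End Densities.

Section Refinement.
Context {R : realType} {T : finType} (adj : rel T).
Context {A A' : {set T}} {P P' : {set {set T}}}.
Hypotheses (hP : partition P A) (hP' : partition P' A').

Local Notation w V V' := ((#|V|%:R * #|V'|%:R) / (#|A|%:R * #|A'|%:R) : R).
Local Notation d := (density R adj A A').

Lemma sum_weight : #|A|%:R * #|A'|%:R != 0 :> R ->
  \sum_(V in P) \sum_(V' in P') w V V' = 1.
Proof.
move=> AA'_neq0; under eq_bigr do rewrite -mulr_suml -mulr_sumr.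
rewrite -mulr_suml -mulr_suml -!natr_sum.
by rewrite -(card_partition hP) -(card_partition hP') mulfV.
Qed.

Lemma sum_weight_density :
  \sum_(V in P) \sum_(V' in P') w V V' * density R adj V V' = d.
Proof.
under eq_bigr do under eq_bigr do rewrite mulrAC mul_card_density.
under eq_bigr do rewrite -mulr_suml -natr_sum.
by rewrite -mulr_suml -natr_sum -(edges_between_partition adj hP hP').
Qed.

Lemma sum_weight_density_ratio : d != 0 ->
  \sum_(V in P) \sum_(V' in P') w V V' * (density R adj V V' / d) = 1.
Proof.
move=> d_neq0; under eq_bigr do under eq_bigr do rewrite mulrA.
under eq_bigr do rewrite -mulr_suml.
by rewrite -mulr_suml sum_weight_density mulfV.
Qed.

Lemma calH_set1 : calH R adj A A' [set A] [set A'] = Hfun d.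
Proof.
rewrite /calH !big_set1.
have [AA'0 | AA'_neq0] := eqVneq (#|A|%:R * #|A'|%:R : R) 0;
  last by rewrite mulfV ?mul1r.
by rewrite /density AA'0 invr0 !mulr0 mul0r /Hfun eqxx.
Qed.

Lemma calH_sub_calH_set1 : 0 < d ->
  calH R adj A A' P P' - calH R adj A A' [set A] [set A'] =
  d * \sum_(V in P) \sum_(V' in P') w V V' * Hfun (density R adj V V' / d).
Proof.
move=> d_gt0; have d_neq0 : d != 0 := lt0r_neq0 d_gt0.
have ratio_ge0 V V' : 0 <= density R adj V V' / d.
  by rewrite divr_ge0 ?density_ge0 ?ltW.
have Hfun_density V V' : Hfun (density R adj V V') =
    density R adj V V' / d * Hfun d + d * Hfun (density R adj V V' / d).
  by rewrite -HfunM ?ratio_ge0 ?(ltW d_gt0) // mulrC divfK.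
rewrite calH_set1 /calH.
under eq_bigr do under eq_bigr do
  rewrite Hfun_density mulrDr mulrA [_ * (d * _)]mulrCA.
under eq_bigr do rewrite big_split /= -mulr_suml -mulr_sumr.
rewrite big_split /= -mulr_suml -mulr_sumr sum_weight_density_ratio //.
by rewrite mul1r addrAC subrr add0r.
Qed.
End Refinement.

Theorem corollary3p3 (R : realType) (T : finType) (adj : rel T)
    (adj_sym : symmetric adj) (adj_irr : irreflexive adj)
    (A A' : {set T}) (P P' : {set {set T}})
    (hP : finset.partition P A) (hP' : finset.partition P' A')
    (hd : density R adj A A' != 0) :
  calH R adj A A' P P' - calH R adj A A' [set A]%SET [set A']%SET >=
  (2%:R)^-1 * density R adj A A' *
  (\sum_(V in P) \sum_(V' in P')
     ((#|V|%:R * #|V'|%:R) / (#|A|%:R * #|A'|%:R)) *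
       `|density R adj V V' / density R adj A A' - 1|) ^+ 2.
Proof.
set d := density R adj A A'.
have d_gt0 : 0 < d by rewrite lt_def hd density_ge0.
have AA'_neq0 : #|A|%:R * #|A'|%:R != 0 :> R.
  by apply: contraNneq hd => AA'0; rewrite /d /density AA'0 invr0 mulr0.
rewrite calH_sub_calH_set1 // -mulrA mulrCA ler_pM2l //.
rewrite !pair_big_dep /=; apply: pinsker => [p _ | p _ | |].
- by rewrite divr_ge0 ?mulr_ge0.
- by rewrite divr_ge0 ?density_ge0 ?ltW.
- by have := sum_weight hP hP' AA'_neq0; rewrite pair_big_dep.
- by have := sum_weight_density_ratio adj hP hP' hd; rewrite pair_big_dep.
Qed.
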